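(* Let $\phi_{\mathrm p}$ (on $\mathbb R^n$) and $\phi_{\mathrm d}$ (on $\mathbb R^m$) be Bregman kernels with distances $d_{\mathrm p},d_{\mathrm d}$ satisfying $d_{\mathrm p}(x,x')\ge\frac12\|x-x'\|_{\mathrm p}^2$ and $d_{\mathrm d}(z,z')\ge\frac12\|z-z'\|_{\mathrm d}^2$ for all $(x,x')\in\operatorname{dom} d_{\mathrm p}$, $(z,z')\in\operatorname{dom} d_{\mathrm d}$, where $\|\cdot\|_{\mathrm p},\|\cdot\|_{\mathrm d}$ are norms. Let $h$ be a convex function, differentiable on its open domain, with $\operatorname{dom}\phi_{\mathrm p}\subseteq\operatorname{dom} h$ and, for some $L>0$, $h(x)-h(x')-\langle\nabla h(x'),x-x'\rangle\le L\,d_{\mathrm p}(x,x')$ for all $(x,x')\in\operatorname{dom} d_{\mathrm p}$. Let $A\in\mathbb R^{m\times n}$, $\|A\|=\sup_{u\ne0,v\ne0}\frac{\langle v,Au\rangle}{\|v\|_{\mathrm d}\|u\|_{\mathrm p}}$, and $\sigma,\tau>0$. Define \[\phi_\pm(x,z)=\tfrac1\tau\phi_{\mathrm p}(x)+\tfrac1\sigma\phi_{\mathrm d}(z)\pm\langle z,Ax\rangle,\qquad \phi_{\mathrm{dcv}}=\phi_+-h,\quad \phi_{\mathrm{pcv}}=\phi_--h.\] Then: if $\sigma\tau\|A\|^2\le1$, the functions $\phi_+$ and $\phi_-$ are convex, and they are strongly convex if $\sigma\tau\|A\|^2<1$; if $\sigma\tau\|A\|^2+\tau L\le1$, the functions $\phi_{\mathrm{dcv}}$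 and $\phi_{\mathrm{pcv}}$ are convex, and they are strongly convex if $\sigma\tau\|A\|^2+\tau L<1$.
   Context: A Bregman kernel is a convex function $\phi$ whose domain has nonempty interior, continuous on $\operatorname{dom}\phi$ and continuously differentiable on $\operatorname{int}(\operatorname{dom}\phi)$; its Bregman distance is $d(x,y)=\phi(x)-\phi(y)-\langle\nabla\phi(y),x-y\rangle$ with $\operatorname{dom} d=\operatorname{dom}\phi\times\operatorname{int}(\operatorname{dom}\phi)$. The functions $h(x)$, $\phi_\pm$ etc. are considered on $\operatorname{dom}\phi_{\mathrm p}\times\operatorname{dom}\phi_{\mathrm d}$. *)

From mathcomp Require Import all_boot all_algebra all_classical all_reals all_analysis.
Set Implicit Arguments. Unset Strict Implicit. Unset Printing Implicit Defensive.
Import GRing.Theory Num.Theory.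
Local Open Scope ring_scope.
Local Open Scope classical_set_scope.

Section Defs.
Variable R : realType.

(** Column vectors of R^n, with their canonical normed-module topology
    (used only for topology/differentiability; all norms on R^n are
    equivalent, so this is the usual topology of R^n). *)
Definition vec (n : nat) : normedModType R := 'cV[R]_n.

Definition dotv (n : nat) (u v : 'cV[R]_n) : R := \sum_(i < n) u i 0 * v i 0.

Definition is_norm (n : nat) (N : 'cV[R]_n -> R) : Prop :=
  [/\ forall x, N x = 0 -> x = 0,
      forall (a : R) x, N (a *: x) = `|a| * N x &
      forall x y, N (x + y) <= N x + N y].

(** A real function f is convex on D (D is the effective domain of the
    extended-valued function equal to f on D and +oo outside): D is convex
    and Jensen's inequality holds on D. *)
Definition convex_on (V : lmodType R) (D : set V) (f : V -> R) : Prop :=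
  forall x y, D x -> D y -> forall t : R, 0 <= t <= 1 ->
    D (t *: x + (1 - t) *: y) /\
    f (t *: x + (1 - t) *: y) <= t * f x + (1 - t) * f y.

Definition strongly_convex_on (V : lmodType R) (N : V -> R)
    (D : set V) (f : V -> R) : Prop :=
  exists2 mu : R, 0 < mu &
  forall x y, D x -> D y -> forall t : R, 0 <= t <= 1 ->
    D (t *: x + (1 - t) *: y) /\
    f (t *: x + (1 - t) *: y) <=
      t * f x + (1 - t) * f y - mu / 2 * t * (1 - t) * N (x - y) ^+ 2.

(** Continuity of the gradient
    y |-> grad phi y on int D is expressed through its directional
    components y |-> 'd phi y v (equivalent in finite dimension). *)
Definition bregman_kernel (n : nat) (D : set (vec n)) (phi : vec n -> R) : Prop :=
  [/\ convex_on D phi,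
      interior D !=set0,
      {within D, continuous (phi : vec n -> R^o)},
      (forall x, interior D x -> differentiable phi x) &
      (forall (v : vec n) x, interior D x ->
         {for x, continuous (fun y : vec n => ('d phi y v : R^o))})].

(** Bregman distance d(x,y) = phi x - phi y - <grad phi y, x - y>,
    where <grad phi y, v> is the differential 'd phi y v;
    its domain is D x int D. *)
Definition bregman_dist (n : nat) (phi : vec n -> R) (x y : vec n) : R :=
  phi x - phi y - 'd phi y (x - y).

Definition op_norm (m n : nat) (Np : 'cV[R]_n -> R) (Nd : 'cV[R]_m -> R)
    (A : 'M[R]_(m, n)) : R :=
  sup [set r : R | exists u : 'cV[R]_n, exists v : 'cV[R]_m,
         [/\ u != 0, v != 0 & r = dotv v (A *m u) / (Nd v * Np u)]].

Definition phi_pm (m n : nat) (s : R) (phip : vec n -> R) (phid : vec m -> R)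
    (A : 'M[R]_(m, n)) (sigma tau : R) (p : vec n * vec m) : R :=
  tau^-1 * phip p.1 + sigma^-1 * phid p.2 + s * dotv p.2 (A *m p.1).

End Defs.

(* Write phi_pm s - g as F x + G z + s <z, A x> with F = phip / tau - g and
   G = phid / sigma.  The Bregman lower bounds of the kernels, together with
   the relative smoothness d_g <= l d_p of g, give F and G first-order strong
   convexity inequalities with moduli 1/tau - l and 1/sigma at interior points;
   since the domains are convex with nonempty interior and the functions are
   continuous on them, these inequalities extend to the whole domains by
   moving the points along segments towards an interior point.  In a convex
   combination the bilinear coupling contributes the defect
   -t (1 - t) s <z - z', A (x - x')>, at most ||A|| ||z - z'||_d ||x - x'||_p in
   absolute value, and by AM-GM the two moduli absorb it as soon as
   ||A||^2 <= (1/tau - l) (1/sigma), i.e. sigma tau ||A||^2 + tau l <= 1; a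
   strict inequality leaves a positive modulus.  ||A|| is finite because all
   norms on R^n are equivalent. *)

From mathcomp Require Import all_boot all_algebra all_classical all_reals all_analysis.
From mathcomp Require Import ring lra.
Import order.Order.TTheory GRing.Theory Num.Theory numFieldNormedType.Exports.
Set Implicit Arguments. Unset Strict Implicit. Unset Printing Implicit Defensive.
Local Open Scope ring_scope.
Local Open Scope classical_set_scope.

Lemma normr_entry_le_mx_norm (R : realType) p q (M : 'M[R]_(p, q)) i j :
  `|M i j| <= `|M|.
Proof.
rewrite [X in _ <= X]/Num.Def.normr /= mx_normrE; apply/bigmax_geP; right => /=.
by exists (i, j).
Qed.

Section IsNorm.
Variables (R : realType) (n : nat) (N : 'cV[R]_n -> R).
Hypothesis N_norm : is_norm N.

Lemma is_normZ a x : N (a *: x) = `|a| * N x.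
Proof. by case: N_norm. Qed.

Lemma is_normD x y : N (x + y) <= N x + N y.
Proof. by case: N_norm. Qed.

Lemma is_norm0 : N 0 = 0.
Proof. by have := is_normZ 0 0; rewrite scale0r normr0 mul0r. Qed.

Lemma is_normN x : N (- x) = N x.
Proof. by rewrite -scaleN1r is_normZ normrN normr1 mul1r. Qed.

Lemma is_norm_ge0 x : 0 <= N x.
Proof. by have := is_normD x (- x); rewrite subrr is_norm0 is_normN; lra. Qed.

Lemma is_norm_gt0 x : x != 0 -> 0 < N x.
Proof.
move=> x0; rewrite lt0r is_norm_ge0 andbT; apply: contra_neq x0.
by case: N_norm => N0 _ _; apply: N0.
Qed.

Lemma is_norm_dist x y : `|N x - N y| <= N (x - y).
Proof.
have := is_normD (x - y) y; have := is_normD (y - x) x.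
by rewrite !subrK -[y - x]opprB is_normN ler_norml; lra.
Qed.

Lemma is_norm_sum (I : finType) (F : I -> 'cV[R]_n) :
  N (\sum_i F i) <= \sum_i N (F i).
Proof.
elim/big_rec2: _ => [|i y1 y2 _ h]; first by rewrite is_norm0.
by apply: le_trans (is_normD _ _) _; rewrite lerD2l.
Qed.

Lemma is_norm_tr_le (w : 'rV[R]_n) :
  N w^T <= (\sum_(i < n) N (delta_mx i 0)) * `|w|.
Proof.
rewrite {1}(matrix_sum_delta w^T) mulr_suml.
apply: le_trans (is_norm_sum _) _; apply: ler_sum => i _.
rewrite big_ord1 is_normZ mulrC (_ : ord0 = 0); last exact: val_inj.
by rewrite ler_wpM2l ?is_norm_ge0 // mxE normr_entry_le_mx_norm.
Qed.

Lemma continuous_is_norm_tr : continuous (fun w : 'rV[R]_n => N w^T).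
Proof.
set K := \sum_(i < n) N (delta_mx i 0).
have K0 : 0 < K + 1 by rewrite ltr_wpDl // sumr_ge0 // => i _; exact: is_norm_ge0.
move=> w; apply/(@cvgrPdist_lt _ _ _ (nbhs w)) => e e0; near=> v.
apply: le_lt_trans (is_norm_dist _ _) _; rewrite -linearB /=.
apply: le_lt_trans (is_norm_tr_le _) _.
apply: le_lt_trans (_ : (K + 1) * `|w - v| < _).
  by rewrite ler_wpM2r // lerDl.
rewrite -ltr_pdivlMl //; near: v.
by apply: cvgr_dist_lt; [exact: cvg_id | rewrite mulr_gt0 ?invr_gt0].
Unshelve. all: by end_near.
Qed.

Lemma is_norm_coord_le :
  exists2 c : R, 0 < c & forall (u : 'cV[R]_n) i, c * `|u i 0| <= N u.
Proof.
(* c is the minimum of N over the compact unit sphere of the max-norm, which is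
   empty only when n = 0 *)
pose S := [set w : 'rV[R]_n | `|w| = 1].
suff lower c : 0 < c -> (forall w, S w -> c <= N w^T) ->
    forall (u : 'cV[R]_n) i, c * `|u i 0| <= N u.
  have [S0|S_empty] := pselect (S !=set0); last first.
    by exists 1 => //; apply: lower => // w Sw; case: S_empty; exists w.
  have S_compact : compact S.
    apply: bounded_closed_compact.
      by exists 1; split=> [|M M1 x /= ->]; [exact: real1 | exact: ltW].
    apply: (@preimage_closed _ _ (fun w : 'rV[R]_n => `|w|) [set x | x = 1]).
      by move=> x _; exact: norm_continuous.
    exact: closed_eq.
  have [w0 /set_mem Sw0 w0_min] := compact_EVT_min S0 S_compact
    (continuous_subspaceT continuous_is_norm_tr).
  have w0_gt0 : 0 < N w0^T.
    apply: is_norm_gt0; apply: contra_eq_neq Sw0 => /(congr1 trmx).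
    by rewrite trmxK linear0 => ->; rewrite normr0 eq_sym oner_neq0.
  by exists (N w0^T); last by apply: lower => // w /mem_set /w0_min.
move=> c0 c_min u i; have [->|u0] := eqVneq u 0.
  by rewrite mxE normr0 mulr0 is_norm0.
have uT0 : 0 < `|u^T|.
  by rewrite normr_gt0; apply: contra_neq u0 => /(congr1 trmx); rewrite trmxK linear0.
have := c_min (`|u^T|^-1 *: u^T).
rewrite /S /= normrZ normfV normr_id mulVf ?gt_eqF // => /(_ erefl).
rewrite linearZ /= trmxK is_normZ normfV normr_id ler_pdivlMl // => cuN.
apply: le_trans cuN; rewrite mulrC ler_wpM2r ?(ltW c0) //.
by have := normr_entry_le_mx_norm u^T 0 i; rewrite mxE.
Qed.

End IsNorm.

Section DotProduct.
Variables (R : realType) (n : nat).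
Implicit Types u v : 'cV[R]_n.

Lemma dotvDl u1 u2 v : dotv (u1 + u2) v = dotv u1 v + dotv u2 v.
Proof. by rewrite /dotv -big_split; apply: eq_bigr => i _; rewrite mxE mulrDl. Qed.

Lemma dotvDr u v1 v2 : dotv u (v1 + v2) = dotv u v1 + dotv u v2.
Proof. by rewrite /dotv -big_split; apply: eq_bigr => i _; rewrite mxE mulrDr. Qed.

Lemma dotvZl k u v : dotv (k *: u) v = k * dotv u v.
Proof. by rewrite /dotv mulr_sumr; apply: eq_bigr => i _; rewrite mxE mulrA. Qed.

Lemma dotvZr k u v : dotv u (k *: v) = k * dotv u v.
Proof. by rewrite /dotv mulr_sumr; apply: eq_bigr => i _; rewrite mxE mulrCA. Qed.

Lemma dotvNl u v : dotv (- u) v = - dotv u v.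
Proof. by rewrite -scaleN1r dotvZl mulN1r. Qed.

Lemma dotvNr u v : dotv u (- v) = - dotv u v.
Proof. by rewrite -scaleN1r dotvZr mulN1r. Qed.

Lemma dotv0l v : dotv 0 v = 0.
Proof. by rewrite -(scale0r 0) dotvZl mul0r. Qed.

Lemma dotv0r u : dotv u 0 = 0.
Proof. by rewrite -(scale0r 0) dotvZr mul0r. Qed.

End DotProduct.

Lemma dotv_mulmx_convex_comb (R : realType) m n (A : 'M[R]_(m, n))
    (x1 x2 : 'cV[R]_n) (z1 z2 : 'cV[R]_m) (t : R) :
  dotv (t *: z1 + (1 - t) *: z2) (A *m (t *: x1 + (1 - t) *: x2)) =
  t * dotv z1 (A *m x1) + (1 - t) * dotv z2 (A *m x2)
  - t * (1 - t) * dotv (z1 - z2) (A *m (x1 - x2)).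
Proof.
rewrite mulmxDr mulmxBr -!scalemxAr !dotvDl !dotvDr !dotvZl !dotvZr.
by rewrite !dotvNl !dotvNr; ring.
Qed.

Section OperatorNorm.
Variables (R : realType) (m n : nat) (Np : 'cV[R]_n -> R) (Nd : 'cV[R]_m -> R).
Variable A : 'M[R]_(m, n).
Hypotheses (Np_norm : is_norm Np) (Nd_norm : is_norm Nd).

Lemma dotv_mulmx_bounded :
  exists C : R, forall u v, `|dotv v (A *m u)| <= C * (Nd v * Np u).
Proof.
have [cp cp0 cpP] := is_norm_coord_le Np_norm.
have [cd cd0 cdP] := is_norm_coord_le Nd_norm.
exists ((\sum_i \sum_j `|A i j|) / (cd * cp)) => u v.
rewrite /dotv; apply: le_trans (ler_norm_sum _ _ _) _.
rewrite -mulrA mulr_suml; apply: ler_sum => i _.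
rewrite normrM mxE; apply: le_trans (ler_wpM2l (normr_ge0 _) (ler_norm_sum _ _ _)) _.
rewrite mulr_sumr mulr_suml; apply: ler_sum => j _.
have vi : `|v i 0| <= Nd v / cd by rewrite ler_pdivlMr // mulrC cdP.
have uj : `|u j 0| <= Np u / cp by rewrite ler_pdivlMr // mulrC cpP.
have -> : `|A i j| * ((cd * cp)^-1 * (Nd v * Np u)) =
    (Nd v / cd) * (`|A i j| * (Np u / cp)) by rewrite invfM; ring.
by rewrite normrM; apply: ler_pM => //; exact: ler_wpM2l.
Qed.

Lemma dotv_mulmx_le_op_norm u v : dotv v (A *m u) <= op_norm Np Nd A * Nd v * Np u.
Proof.
have [->|u0] := eqVneq u 0; first by rewrite mulmx0 dotv0r is_norm0 ?mulr0.
have [->|v0] := eqVneq v 0; first by rewrite dotv0l is_norm0 ?mulr0 ?mul0r.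
have [C C_bound] := dotv_mulmx_bounded.
rewrite /op_norm; set S := (X in sup X).
have S_sup : has_sup S.
  split; first by exists (dotv v (A *m u) / (Nd v * Np u)), u, v.
  exists C => _ [u' [v' [u'0 v'0 ->]]].
  rewrite ler_pdivrMr ?mulr_gt0 ?is_norm_gt0 //.
  exact: le_trans (ler_norm _) (C_bound u' v').
have := sup_upper_bound S_sup (ex_intro _ u (ex_intro _ v (And3 u0 v0 erefl))).
by rewrite ler_pdivrMr ?mulr_gt0 ?is_norm_gt0 // mulrA.
Qed.

Lemma normr_dotv_mulmx_le u v :
  `|dotv v (A *m u)| <= `|op_norm Np Nd A| * Nd v * Np u.
Proof.
have NuNv : 0 <= Nd v * Np u by rewrite mulr_ge0 ?is_norm_ge0.
have le_norm : op_norm Np Nd A * Nd v * Np u <= `|op_norm Np Nd A| * Nd v * Np u.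
  by rewrite -!mulrA ler_wpM2r // ler_norm.
have := dotv_mulmx_le_op_norm u v; have := dotv_mulmx_le_op_norm u (- v).
rewrite dotvNl is_normN // ler_norml; lra.
Qed.

End OperatorNorm.

Definition convex_with_modulus (R : realType) (V : lmodType R) (N : V -> R) (c : R)
    (D : set V) (f : V -> R) : Prop :=
  forall x y, D x -> D y -> forall t : R, 0 <= t <= 1 ->
    D (t *: x + (1 - t) *: y) /\
    f (t *: x + (1 - t) *: y) <=
      t * f x + (1 - t) * f y - c / 2 * t * (1 - t) * N (x - y) ^+ 2.

Lemma convex_with_modulus0 (R : realType) (V : lmodType R) (N : V -> R) D f :
  convex_with_modulus N 0 D f -> convex_on D f.
Proof.
move=> f_conv x y Dx Dy t t01; have [Dxy le_f] := f_conv x y Dx Dy t t01.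
by split=> //; move: le_f; rewrite !mul0r subr0.
Qed.

Section ConvexDomain.
Variables (R : realType) (V : normedModType R) (D : set V).

Definition convex_domain := forall x y, D x -> D y -> forall t : R, 0 <= t <= 1 ->
  D (t *: x + (1 - t) *: y).

Hypothesis D_convex : convex_domain.

Lemma interior_convex_comb x x0 e : D x -> interior D x0 -> 0 < e <= 1 ->
  interior D ((1 - e) *: x + e *: x0).
Proof.
move=> Dx /nbhs_ballP[r r0 rD] /andP[e0 e1].
apply/nbhs_ballP; exists (e * r); first by rewrite /= mulr_gt0.
move=> y; rewrite -ball_normE /= => hy.
pose y0 := x0 + e^-1 *: (y - ((1 - e) *: x + e *: x0)).
have -> : y = (1 - e) *: x + (1 - (1 - e)) *: y0.
  rewrite (_ : 1 - (1 - e) = e); last by ring.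
  by rewrite /y0 scalerDr scalerA mulfV ?gt_eqF // scale1r addrA addrC subrK.
apply: D_convex => //; last by apply/andP; split; lra.
apply: rD; rewrite -ball_normE /= /y0 opprD addrA subrr add0r normrN normrZ.
by rewrite gtr0_norm ?invr_gt0 // ltr_pdivrMl // distrC.
Qed.

Lemma interior_convex_domain x y t : interior D x -> interior D y -> 0 <= t <= 1 ->
  interior D (t *: x + (1 - t) *: y).
Proof.
move=> ix iy /andP[t0 t1].
have [->|t_neq1] := eqVneq t 1; first by rewrite subrr scale0r addr0 scale1r.
have := interior_convex_comb (interior_subset ix) iy (e := 1 - t).
rewrite (_ : 1 - (1 - t) = t); last by ring.
by apply; rewrite subr_gt0 lt_neqAle t_neq1 t1; lra.
Qed.

Lemma cvg_segment_within (f : V -> R) x x0 : D x -> D x0 ->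
  {within D, continuous f} -> f ((1 - e) *: x + e *: x0) @[e --> 0^'+] --> f x.
Proof.
move=> Dx Dx0 /subspace_continuousP /(_ x Dx) f_cont U /f_cont f_U.
have seg_cvg : ((1 - e) *: x + e *: x0) @[e --> 0^'+] --> x.
  apply: cvg_at_right_filter.
  suff : ((1 - e) *: x + e *: x0) @[e --> 0] --> (1 - 0) *: x + 0 *: x0.
    by rewrite subr0 scale1r scale0r addr0.
  apply: cvgD; apply: cvgZ; [apply: cvgB | | |];
    solve [exact: cvg_cst | exact: cvg_id].
have near_U : \forall e \near 0^'+,
    D ((1 - e) *: x + e *: x0) -> U (f ((1 - e) *: x + e *: x0)) := seg_cvg _ f_U.
have D_seg : \forall e \near 0^'+, D ((1 - e) *: x + e *: x0).
  near=> e.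
  have e0 : 0 < e by near: e; exact: nbhs_right_gt.
  have e1 : e < 1 by near: e; exact: nbhs_right_lt.
  have := D_convex Dx Dx0 (t := 1 - e).
  by rewrite (_ : 1 - (1 - e) = e); [apply; apply/andP; split; lra | ring].
change (\forall e \near 0^'+, U (f ((1 - e) *: x + e *: x0))).
by apply: filterS2 near_U D_seg => e; apply.
Unshelve. all: by end_near.
Qed.

End ConvexDomain.

Section FirstOrderConvexity.
Variables (R : realType) (V : normedModType R) (N : V -> R) (D : set V).
Variables (f : V -> R) (c : R).
Hypotheses (NZ : forall (a : R) x, N (a *: x) = `|a| * N x) (D_convex : convex_domain D).
Hypothesis f_bregman : forall x z, D x -> interior D z ->
  c / 2 * N (x - z) ^+ 2 <= f x - f z - 'd f z (x - z).

Lemma first_order_convex_interior x y t : interior D x -> interior D y ->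
  0 <= t <= 1 ->
  f (t *: x + (1 - t) *: y) <=
    t * f x + (1 - t) * f y - c / 2 * t * (1 - t) * N (x - y) ^+ 2.
Proof.
move=> ix iy t01; have /andP[t0 t1] := t01.
set z := t *: x + (1 - t) *: y.
have iz : interior D z := interior_convex_domain D_convex ix iy t01.
have xz : x - z = (1 - t) *: (x - y).
  by rewrite /z scalerBr [(1 - t) *: x]scalerBl scale1r opprD addrA.
have yz : y - z = (- t) *: (x - y).
  rewrite /z [(1 - t) *: y]scalerBl scale1r opprD opprB scalerBr !scaleNr opprK.
  by rewrite addrCA [y + _]addrC subrK.
have := f_bregman (interior_subset ix) iz; have := f_bregman (interior_subset iy) iz.
rewrite xz yz !linearZ !NZ normrN !ger0_norm ?subr_ge0 //= /GRing.scale /=.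
move: (f x) (f y) (f z) ('d f z (x - y)) (N (x - y)) => fx fy fz d M hy hx.
have t1' : 0 <= 1 - t by lra.
have := ler_wpM2l t0 hx; have := ler_wpM2l t1' hy.
nra.
Qed.

Lemma first_order_convex_with_modulus : interior D !=set0 ->
  {within D, continuous f} -> convex_with_modulus N c D f.
Proof.
(* apply the interior inequality to x and y pushed towards an interior point x0,
   and let them come back *)
move=> [x0 ix0] f_cont x y Dx Dy t t01; split; first exact: D_convex.
have Dx0 := interior_subset ix0.
have one_sub_cvg : (1 - e) @[e --> (0 : R)^'+] --> (1 : R).
  apply: cvg_at_right_filter; rewrite -[X in _ --> X]subr0.
  by apply: cvgB; [exact: cvg_cst | exact: cvg_id].
set M := N (x - y); set z := t *: x + (1 - t) *: y.
suff : f z <= t * f x + (1 - t) * f y - c / 2 * t * (1 - t) * M ^+ 2 * (1 * 1).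
  by rewrite !mulr1.
apply: (ler_cvg_to (cvg_segment_within D_convex (D_convex Dx Dy t01) Dx0 f_cont)
  (cvgB (cvgD (cvgM (cvg_cst t) (cvg_segment_within D_convex Dx Dx0 f_cont))
              (cvgM (cvg_cst (1 - t)) (cvg_segment_within D_convex Dy Dx0 f_cont)))
        (cvgM (cvg_cst (c / 2 * t * (1 - t) * M ^+ 2)) (cvgM one_sub_cvg one_sub_cvg)))).
near=> e.
have e0 : 0 < e by near: e; exact: nbhs_right_gt.
have e1 : e < 1 by near: e; exact: nbhs_right_lt.
have e01 : 0 < e <= 1 by apply/andP; split; lra.
have -> : (1 - e) *: z + e *: x0 =
    t *: ((1 - e) *: x + e *: x0) + (1 - t) *: ((1 - e) *: y + e *: x0).
  rewrite /z !scalerDr !scalerA addrACA -scalerDl.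
  by rewrite (_ : t * e + (1 - t) * e = e) ?(mulrC t) ?(mulrC (1 - t)) //; ring.
have := first_order_convex_interior (interior_convex_comb D_convex Dx ix0 e01)
  (interior_convex_comb D_convex Dy ix0 e01) t01.
have -> : (1 - e) *: x + e *: x0 - ((1 - e) *: y + e *: x0) = (1 - e) *: (x - y).
  by rewrite opprD addrACA subrr addr0 scalerBr.
rewrite NZ ger0_norm -/M; last lra.
move/le_trans; apply; rewrite /= lerB // exprMn.
rewrite [X in X <= _](_ : _ = c / 2 * t * (1 - t) * ((1 - e) ^+ 2 * M ^+ 2)) //.
by rewrite /GRing.mul_fun /=; ring.
Unshelve. all: by end_near.
Qed.

End FirstOrderConvexity.

Section RealInequalities.
Variable R : realFieldType.

Lemma weighted_amgm (P Q K a b : R) : 0 <= P -> 0 <= Q -> 0 <= K ->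
  K ^+ 2 <= P * Q -> 0 <= a -> 0 <= b -> 2 * K * a * b <= P * a ^+ 2 + Q * b ^+ 2.
Proof.
move=> P0 Q0 K0 KPQ a0 b0.
have lhs0 : 0 <= 2 * K * a * b by rewrite !mulr_ge0.
have rhs0 : 0 <= P * a ^+ 2 + Q * b ^+ 2 by rewrite addr_ge0 // mulr_ge0 ?exprn_ge0.
rewrite -(@ler_pXn2r _ 2) // -subr_ge0.
have -> : (P * a ^+ 2 + Q * b ^+ 2) ^+ 2 - (2 * K * a * b) ^+ 2 =
  (P * a ^+ 2 - Q * b ^+ 2) ^+ 2 + 4 * ((P * Q - K ^+ 2) * (a ^+ 2 * b ^+ 2)) by ring.
have KPQ' : 0 <= P * Q - K ^+ 2 by rewrite subr_ge0.
by rewrite addr_ge0 ?sqr_ge0 // !mulr_ge0 ?exprn_ge0.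
Qed.

Lemma product_margin (P Q k : R) : 0 <= P -> 0 < Q -> 0 <= k -> k < P * Q ->
  exists2 mu : R, 0 < mu &
    [/\ 0 <= P - 2 * mu, 0 <= Q - 2 * mu & k <= (P - 2 * mu) * (Q - 2 * mu)].
Proof.
move=> P0 Q0 k0 kPQ; have PQ0 : 0 < P + Q by lra.
(* 2 mu (P + Q) = P Q - k makes (P - 2 mu) (P + Q) = P^2 + k, and similarly for Q *)
exists ((P * Q - k) / (2 * (P + Q))); first by rewrite divr_gt0 ?mulr_gt0 ?subr_gt0.
set mu := _ / _; have mu_def : 2 * mu * (P + Q) = P * Q - k.
  by rewrite /mu; field; rewrite gt_eqF.
have P_mu : (P - 2 * mu) * (P + Q) = P ^+ 2 + k by rewrite mulrBl mu_def; ring.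
have Q_mu : (Q - 2 * mu) * (P + Q) = Q ^+ 2 + k by rewrite mulrBl mu_def; ring.
split.
- by rewrite -(pmulr_lge0 _ PQ0) P_mu addr_ge0 ?sqr_ge0.
- by rewrite -(pmulr_lge0 _ PQ0) Q_mu addr_ge0 ?sqr_ge0.
- have -> : (P - 2 * mu) * (Q - 2 * mu) = P * Q - 2 * mu * (P + Q) + 4 * mu ^+ 2 by ring.
  by rewrite mu_def; have := sqr_ge0 mu; lra.
Qed.

Lemma step_size_le (sigma tau k l : R) : 0 < sigma -> 0 < tau ->
  sigma * tau * k + tau * l <= 1 -> k <= (tau^-1 - l) * sigma^-1.
Proof.
move=> s0 t0 le1; rewrite (_ : _ * _ = (1 - tau * l) / (sigma * tau)).
  by rewrite ler_pdivlMr ?mulr_gt0 //; lra.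
by field; rewrite !gt_eqF.
Qed.

Lemma step_size_lt (sigma tau k l : R) : 0 < sigma -> 0 < tau ->
  sigma * tau * k + tau * l < 1 -> k < (tau^-1 - l) * sigma^-1.
Proof.
move=> s0 t0 lt1; rewrite (_ : _ * _ = (1 - tau * l) / (sigma * tau)).
  by rewrite ltr_pdivlMr ?mulr_gt0 //; lra.
by field; rewrite !gt_eqF.
Qed.

End RealInequalities.

Lemma coupled_convex_with_modulus (R : realType) m n (A : 'M[R]_(m, n))
    (Np : 'cV[R]_n -> R) (Nd : 'cV[R]_m -> R) (Dp : set (vec R n)) (Dd : set (vec R m))
    (F : vec R n -> R) (G : vec R m -> R) (s K cF cG mu : R) :
  is_norm Np -> is_norm Nd -> `|s| <= 1 ->
  0 <= K -> (forall x z, `|dotv z (A *m x)| <= K * Nd z * Np x) ->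
  0 <= mu -> 0 <= cF - 2 * mu -> 0 <= cG - 2 * mu ->
  K ^+ 2 <= (cF - 2 * mu) * (cG - 2 * mu) ->
  convex_with_modulus Np cF Dp F -> convex_with_modulus Nd cG Dd G ->
  convex_with_modulus (fun p : vec R n * vec R m => Np p.1 + Nd p.2) mu (Dp `*` Dd)
    (fun p => F p.1 + G p.2 + s * dotv p.2 (A *m p.1)).
Proof.
move=> Np_norm Nd_norm s1 K0 K_bound mu0 P0 Q0 KPQ F_conv G_conv.
move=> [x1 z1] [x2 z2] [/= Dx1 Dz1] [/= Dx2 Dz2] t t01; have /andP[t0 t1] := t01.
have [DFx F_le] := F_conv x1 x2 Dx1 Dx2 t t01.
have [DGz G_le] := G_conv z1 z2 Dz1 Dz2 t t01.
split; first by split.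
rewrite /= dotv_mulmx_convex_comb; move: F_le G_le.
set a := Np (x1 - x2); set b := Nd (z1 - z2); set beta := dotv (z1 - z2) (A *m (x1 - x2)).
have a0 : 0 <= a by exact: is_norm_ge0.
have b0 : 0 <= b by exact: is_norm_ge0.
have s_beta : - (s * beta) <= K * b * a.
  apply: le_trans (K_bound (x1 - x2) (z1 - z2)).
  apply: le_trans (ler_norm _) _; rewrite normrN normrM.
  by apply: le_trans (ler_wpM2r (normr_ge0 _) s1) _; rewrite mul1r.
have sum_sqr : mu / 2 * (a + b) ^+ 2 <= mu * (a ^+ 2 + b ^+ 2).
  by have := mulr_ge0 mu0 (sqr_ge0 (a - b)); nra.
have amgm := weighted_amgm P0 Q0 K0 KPQ a0 b0.
have absorb : - (s * beta) + mu / 2 * (a + b) ^+ 2 <= cF / 2 * a ^+ 2 + cG / 2 * b ^+ 2.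
  by nra.
have T0 : 0 <= t * (1 - t) by rewrite mulr_ge0 //; lra.
have := ler_wpM2l T0 absorb.
move: (F _) (G _) (F x1) (F x2) (G z1) (G z2) (dotv z1 _) (dotv z2 _) (a + b).
by move=> *; nra.
Qed.

Section KernelConvexity.
Variables (R : realType) (n : nat) (D : set (vec R n)) (phi : vec R n -> R).
Variable N : 'cV[R]_n -> R.
Hypotheses (phi_kernel : bregman_kernel D phi) (N_norm : is_norm N).
Hypothesis phi_strong : forall x z, D x -> interior D z ->
  2^-1 * N (x - z) ^+ 2 <= bregman_dist phi x z.

Definition relatively_smooth (l : R) (g : vec R n -> R) :=
  [/\ forall x, interior D x -> differentiable g x,
      {within D, continuous g} &
      forall x z, D x -> interior D z -> bregman_dist g x z <= l * bregman_dist phi x z].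

Lemma relatively_smooth0 : relatively_smooth 0 (fun=> 0).
Proof.
split=> [x _ | | x z _ _]; first exact: differentiable_cst.
  by apply: continuous_subspaceT => y; exact: cst_continuous.
rewrite /bregman_dist.
have -> : ('d (fun _ : vec R n => (0 : R)) z : vec R n -> R) = 0 := diff_cst _ _.
by rewrite !subr0 mul0r.
Qed.

Lemma bregman_distZB a (g : vec R n -> R) x z :
  differentiable phi z -> differentiable g z ->
  bregman_dist (fun y => a * phi y - g y) x z =
  a * bregman_dist phi x z - bregman_dist g x z.
Proof.
move=> dphi dg.
have d_comb : ('d (fun y => a * phi y - g y) z : vec R n -> R) =
    a \*: 'd phi z \- 'd g z.
  by rewrite [LHS](diffB (differentiableZ a dphi) dg) (diffZ a dphi).
rewrite /bregman_dist d_comb /=.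
move: (phi x) (phi z) (g x) (g z) ('d phi z (x - z)) ('d g z (x - z)).
by move=> ? ? ? ? ? ?; rewrite /GRing.scale /=; ring.
Qed.

Lemma kernel_sub_convex_with_modulus a l g : relatively_smooth l g -> l <= a ->
  convex_with_modulus N (a - l) D (fun x => a * phi x - g x).
Proof.
case: phi_kernel => phi_conv D_int phi_cont phi_diff _ [g_diff g_cont g_bregman] la.
have D_convex : convex_domain D := fun x y Dx Dy t t01 => (phi_conv x y Dx Dy t t01).1.
have al : 0 <= a - l by rewrite subr_ge0.
have f_bregman x z : D x -> interior D z -> (a - l) / 2 * N (x - z) ^+ 2 <=
    bregman_dist (fun y => a * phi y - g y) x z.
  move=> Dx iz; rewrite bregman_distZB; [|exact: phi_diff|exact: g_diff].
  have := ler_wpM2l al (phi_strong Dx iz); have := g_bregman x z Dx iz.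
  move: (N _ ^+ 2) (bregman_dist phi x z) (bregman_dist g x z) => M bp bg.
  lra.
have f_cont : {within D, continuous (fun x => a * phi x - g x)}.
  apply/subspace_continuousP => y Dy; apply: cvgB.
    apply: cvgM; first exact: cvg_cst.
    exact: (@subspace_continuousP _ D _ (phi : vec R n -> R^o)).1 phi_cont y Dy.
  exact: (@subspace_continuousP _ D _ g).1 g_cont y Dy.
exact: first_order_convex_with_modulus (is_normZ N_norm) D_convex f_bregman D_int f_cont.
Qed.

End KernelConvexity.

Section PrimalDual.
Variables (R : realType) (n m : nat).
Variables (phip : vec R n -> R) (Dp : set (vec R n)) (Np : 'cV[R]_n -> R).
Variables (phid : vec R m -> R) (Dd : set (vec R m)) (Nd : 'cV[R]_m -> R).
Variables (A : 'M[R]_(m, n)) (sigma tau : R).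
Hypotheses (phip_kernel : bregman_kernel Dp phip) (phid_kernel : bregman_kernel Dd phid).
Hypotheses (Np_norm : is_norm Np) (Nd_norm : is_norm Nd).
Hypothesis phip_strong : forall x x', Dp x -> interior Dp x' ->
  2^-1 * Np (x - x') ^+ 2 <= bregman_dist phip x x'.
Hypothesis phid_strong : forall z z', Dd z -> interior Dd z' ->
  2^-1 * Nd (z - z') ^+ 2 <= bregman_dist phid z z'.
Hypotheses (sigma_gt0 : 0 < sigma) (tau_gt0 : 0 < tau).

Let nA := op_norm Np Nd A.
Let N (p : vec R n * vec R m) := Np p.1 + Nd p.2.
Let phi_sub (s : R) (g : vec R n -> R) p := phi_pm s phip phid A sigma tau p - g p.1.

Lemma phi_pm_sub_convex_with_modulus s l g mu : `|s| <= 1 ->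
  relatively_smooth Dp phip l g -> 0 <= mu ->
  0 <= tau^-1 - l - 2 * mu -> 0 <= sigma^-1 - 2 * mu ->
  nA ^+ 2 <= (tau^-1 - l - 2 * mu) * (sigma^-1 - 2 * mu) ->
  convex_with_modulus N mu (Dp `*` Dd) (phi_sub s g).
Proof.
move=> s1 g_smooth mu0 P0 Q0 nA_le.
have F_conv : convex_with_modulus Np (tau^-1 - l) Dp (fun x => tau^-1 * phip x - g x).
  by apply: kernel_sub_convex_with_modulus => //; lra.
have G_conv : convex_with_modulus Nd (sigma^-1 - 0) Dd (fun z => sigma^-1 * phid z - 0).
  apply: kernel_sub_convex_with_modulus (@relatively_smooth0 R m Dd phid) _ => //.
  by rewrite invr_ge0 ltW.
rewrite subr0 in G_conv.
have := coupled_convex_with_modulus Np_norm Nd_norm s1 (normr_ge0 nA)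
  (normr_dotv_mulmx_le A Np_norm Nd_norm) mu0 P0 Q0 _ F_conv G_conv.
have -> : phi_sub s g = fun p => (tau^-1 * phip p.1 - g p.1) + (sigma^-1 * phid p.2 - 0)
  + s * dotv p.2 (A *m p.1).
  by apply/funext => p; rewrite /phi_sub /phi_pm subr0; ring.
by apply; rewrite real_normK ?num_real.
Qed.

Lemma phi_pm_sub_convex s l g : `|s| <= 1 -> relatively_smooth Dp phip l g ->
  sigma * tau * nA ^+ 2 + tau * l <= 1 -> convex_on (Dp `*` Dd) (phi_sub s g).
Proof.
move=> s1 g_smooth le1; have nA_le := step_size_le sigma_gt0 tau_gt0 le1.
have si0 : 0 < sigma^-1 by rewrite invr_gt0.
have tl : 0 <= tau^-1 - l by rewrite -(pmulr_lge0 _ si0) (le_trans (sqr_ge0 nA)).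
apply: (@convex_with_modulus0 _ _ N).
by apply: (phi_pm_sub_convex_with_modulus (l := l)); rewrite ?mulr0 ?subr0 // ltW.
Qed.

Lemma phi_pm_sub_strongly_convex s l g : `|s| <= 1 -> relatively_smooth Dp phip l g ->
  sigma * tau * nA ^+ 2 + tau * l < 1 -> strongly_convex_on N (Dp `*` Dd) (phi_sub s g).
Proof.
move=> s1 g_smooth lt1; have nA_lt := step_size_lt sigma_gt0 tau_gt0 lt1.
have si0 : 0 < sigma^-1 by rewrite invr_gt0.
have tl : 0 <= tau^-1 - l by rewrite -(pmulr_lge0 _ si0) (le_trans (sqr_ge0 nA)) ?ltW.
have [mu mu0 [P0 Q0 nA_le]] := product_margin tl si0 (sqr_ge0 nA) nA_lt.
by exists mu => //; apply: phi_pm_sub_convex_with_modulus s1 g_smooth (ltW mu0) _ _ _.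
Qed.

End PrimalDual.

Theorem mainTheorem2 (R : realType) (n m : nat)
  (phip : vec R n -> R) (Dp : set (vec R n))
  (phid : vec R m -> R) (Dd : set (vec R m))
  (Np : 'cV[R]_n -> R) (Nd : 'cV[R]_m -> R)
  (h : vec R n -> R) (Dh : set (vec R n))
  (L : R) (A : 'M[R]_(m, n)) (sigma tau : R) :
  bregman_kernel Dp phip -> bregman_kernel Dd phid ->
  is_norm Np -> is_norm Nd ->
  (forall x x', Dp x -> interior Dp x' ->
     bregman_dist phip x x' >= 2^-1 * Np (x - x') ^+ 2) ->
  (forall z z', Dd z -> interior Dd z' ->
     bregman_dist phid z z' >= 2^-1 * Nd (z - z') ^+ 2) ->
  open Dh -> convex_on Dh h -> (forall x, Dh x -> differentiable h x) ->
  Dp `<=` Dh ->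
  0 < L ->
  (forall x x', Dp x -> interior Dp x' ->
     h x - h x' - 'd h x' (x - x') <= L * bregman_dist phip x x') ->
  0 < sigma -> 0 < tau ->
  let nA := op_norm Np Nd A in
  let D := Dp `*` Dd in
  let phi_plus := phi_pm 1 phip phid A sigma tau in
  let phi_minus := phi_pm (-1) phip phid A sigma tau in
  let phi_dcv := fun p => phi_plus p - h p.1 in
  let phi_pcv := fun p => phi_minus p - h p.1 in
  let N := fun p : vec R n * vec R m => Np p.1 + Nd p.2 in
  [/\ sigma * tau * nA ^+ 2 <= 1 ->
        convex_on D phi_plus /\ convex_on D phi_minus,
      sigma * tau * nA ^+ 2 < 1 ->
        strongly_convex_on N D phi_plus /\ strongly_convex_on N D phi_minus,
      sigma * tau * nA ^+ 2 + tau * L <= 1 ->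
        convex_on D phi_dcv /\ convex_on D phi_pcv &
      sigma * tau * nA ^+ 2 + tau * L < 1 ->
        strongly_convex_on N D phi_dcv /\ strongly_convex_on N D phi_pcv].
Proof.
move=> phip_kernel phid_kernel Np_norm Nd_norm phip_strong phid_strong _ _ h_diff Dp_Dh _.
move=> h_bregman sigma_gt0 tau_gt0 nA D phi_plus phi_minus phi_dcv phi_pcv N.
have h_smooth : relatively_smooth Dp phip L h.
  split=> [x /interior_subset/Dp_Dh/h_diff //| | x z Dx iz]; last exact: h_bregman.
  apply: continuous_in_subspaceT => x /set_mem/Dp_Dh/h_diff.
  exact: differentiable_continuous.
have sub0 (f : vec R n * vec R m -> R) : f = fun p => f p - (fun=> 0) p.1.
  by apply/funext => p; rewrite subr0.
have s1 : `|1 : R| <= 1 by rewrite normr1.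
have sN1 : `|-1 : R| <= 1 by rewrite normrN normr1.
have convex_pm l g : relatively_smooth Dp phip l g ->
    sigma * tau * nA ^+ 2 + tau * l <= 1 ->
    convex_on D (fun p => phi_plus p - g p.1) /\ convex_on D (fun p => phi_minus p - g p.1).
  move=> g_smooth le1; split; apply: (phi_pm_sub_convex phip_kernel phid_kernel Np_norm
    Nd_norm phip_strong phid_strong sigma_gt0 tau_gt0 _ g_smooth le1) => //.
have strongly_convex_pm l g : relatively_smooth Dp phip l g ->
    sigma * tau * nA ^+ 2 + tau * l < 1 ->
    strongly_convex_on N D (fun p => phi_plus p - g p.1) /\
    strongly_convex_on N D (fun p => phi_minus p - g p.1).
  move=> g_smooth lt1; split; apply: (phi_pm_sub_strongly_convex phip_kernel phid_kernel
    Np_norm Nd_norm phip_strong phid_strong sigma_gt0 tau_gt0 _ g_smooth lt1) => //.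
have smooth0 := @relatively_smooth0 R n Dp phip.
split=> [le1|lt1|le1|lt1].
- rewrite (sub0 phi_plus) (sub0 phi_minus); apply: convex_pm smooth0 _.
  by rewrite mulr0 addr0.
- rewrite (sub0 phi_plus) (sub0 phi_minus); apply: strongly_convex_pm smooth0 _.
  by rewrite mulr0 addr0.
- exact: convex_pm h_smooth le1.
- exact: strongly_convex_pm h_smooth lt1.
Qed.
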